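(* Let $\mathcal C$ be a binary linear code presented by an $m\times n$ parity-check matrix $H$, let $\mathbf c\in\mathcal C$ be a codeword, let $\boldsymbol\omega$ be a linear programming pseudocodeword, and define $\phi_{\mathbf c}:\mathbb R^n\to\mathbb R^n$ by $x_i\mapsto(-1)^{c_i}x_i$ for $i=1,\dots,n$. Let $\mathbf t\in\mathcal K_{\boldsymbol\omega}$. Then $\phi_{\mathbf c}(\mathbf t)\in\mathcal K_{\boldsymbol\omega^{\mathbf c}}$. Moreover, for every $\sigma>0$, if $\boldsymbol\eta$ is a random vector with i.i.d. $N(0,\sigma^2)$ coordinates, then the probability that $\boldsymbol\omega$ is the unique optimal solution of minimizing $(\mathbf t+\boldsymbol\eta)^T\mathbf x$ over $\mathbf x\in\mathcal P(H)$ equals the probability that $\boldsymbol\omega^{\mathbf c}$ is the unique optimal solution of minimizing $(\phi_{\mathbf c}(\mathbf t)+\boldsymbol\eta)^T\mathbf x$ over $\mathbf x\in\mathcal P(H)$.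
   Context: For a row $\mathbf h_j$ of $H=(h_{j,i})$ let $N(\mathbf h_j)=\{i : h_{j,i}=1\}$. The fundamental polytope $\mathcal P(H)$ is written as $\{\mathbf x: A\mathbf x\ge\mathbf b\}$ with the following constraints (rows of $A$ with right-hand sides): $x_i\ge 0$ and $-x_i\ge -1$ for each $i=1,\dots,n$; and for every row index $j$ and every odd-sized $S\subseteq N(\mathbf h_j)$, $-\sum_{i\in S}x_i+\sum_{i'\in N(\mathbf h_j)\setminus S}x_{i'}\ge 1-|S|$. A linear programming (LP) pseudocodeword is an extreme point of $\mathcal P(H)$. For $\mathbf c\in\mathcal C$ and $\mathbf x\in\mathcal P(H)$, the relative point $\mathbf x^{\mathbf c}$ has $i$th coordinate $|x_i-c_i|$; if $\boldsymbol\omega$ is an LP pseudocodeword, so is $\boldsymbol\omega^{\mathbf c}$. The recovery cone $\mathcal K_{\boldsymbol\omega}$ is the set of conic (nonnegative) combinations of the rows of $A$ whose constraints are active (hold with equality) at $\boldsymbol\omega$. The LP decoder, given a received vector $\mathbf y$ (treated as the vector of log-likelihood ratios on the AWGN channel), minimizes $\mathbf y^T\mathbf x$ over $\mathbf x\in\mathcal P(H)$; transmitting $\mathbf t$ over the AWGN channel produces the received vector $\mathbf t+\boldsymbol\eta$. *)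

From HB Require Import structures.
From mathcomp Require Import all_boot all_order all_algebra.
From mathcomp Require Import all_classical all_reals all_analysis.
From Stdlib Require List.

Set Implicit Arguments.
Unset Strict Implicit.
Unset Printing Implicit Defensive.

Import Order.TTheory GRing.Theory Num.Theory.

Local Open Scope classical_set_scope.
Local Open Scope ring_scope.

Definition codeword (m n : nat) (H : 'M['F_2]_(m, n)) (c : 'rV['F_2]_n) : Prop :=
  H *m c^T = 0.

Definition Nrow (m n : nat) (H : 'M['F_2]_(m, n)) (j : 'I_m) : {set 'I_n} :=
  [set i | H j i == 1].

Definition bitR (R : realType) (n : nat) (c : 'rV['F_2]_n) (i : 'I_n) : R :=
  if c 0 i == 0 then 0 else 1.
Arguments bitR R {n} c i.

(* Constraints (rows of A, with right-hand sides b) of P(H).           *)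

Inductive cstr (m n : nat) : Type :=
| CLo of 'I_n
| CHi of 'I_n
| CPar of 'I_m & {set 'I_n}.   (* parity constraint for row j, odd S *)

Definition cstr_valid (m n : nat) (H : 'M['F_2]_(m, n)) (k : cstr m n) : Prop :=
  match k with
  | CLo _ => True
  | CHi _ => True
  | CPar j S0 => (S0 \subset Nrow H j) /\ odd #|S0|
  end.

Definition cstr_row (R : realType) (m n : nat) (H : 'M['F_2]_(m, n))
  (k : cstr m n) : 'I_n -> R :=
  match k with
  | CLo i => fun i' => if i' == i then 1 else 0
  | CHi i => fun i' => if i' == i then -1 else 0
  | CPar j S0 => fun i' => if i' \in S0 then -1
                          else if i' \in Nrow H j then 1 else 0
  end.

Definition cstr_rhs (R : realType) (m n : nat) (k : cstr m n) : R :=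
  match k with
  | CLo _ => 0
  | CHi _ => -1
  | CPar _ S0 => 1 - (#|S0|)%:R
  end.
Arguments cstr_rhs R {m n} k.
Arguments cstr_row R {m n} H k.

Definition dotR {R : realType} (n : nat) (a x : 'I_n -> R) : R :=
  \sum_(i < n) a i * x i.

Definition fund_polytope (R : realType) (m n : nat) (H : 'M['F_2]_(m, n)) :
  set ('I_n -> R) :=
  [set x | forall k : cstr m n, cstr_valid H k ->
       cstr_rhs R k <= dotR (cstr_row R H k) x].
Arguments fund_polytope R {m n} H.

Definition extreme_point (R : realType) (n : nat) (K : set ('I_n -> R))
  (x : 'I_n -> R) : Prop :=
  K x /\
  forall (y z : 'I_n -> R) (l : R), K y -> K z -> 0 < l < 1 ->
    x = (fun i => l * y i + (1 - l) * z i) -> y = z.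

Definition LP_pseudocodeword (R : realType) (m n : nat) (H : 'M['F_2]_(m, n))
  (w : 'I_n -> R) : Prop :=
  extreme_point (fund_polytope R H) w.

Definition relpt (R : realType) (n : nat) (c : 'rV['F_2]_n) (x : 'I_n -> R) :
  'I_n -> R :=
  fun i => `|x i - bitR R c i|.

Definition phi (R : realType) (n : nat) (c : 'rV['F_2]_n) (x : 'I_n -> R) :
  'I_n -> R :=
  fun i => (-1) ^+ (c 0 i != 0) * x i.

Definition active (R : realType) (m n : nat) (H : 'M['F_2]_(m, n))
  (w : 'I_n -> R) (k : cstr m n) : Prop :=
  dotR (cstr_row R H k) w = cstr_rhs R k.

Definition recovery_cone (R : realType) (m n : nat) (H : 'M['F_2]_(m, n))
  (w : 'I_n -> R) : set ('I_n -> R) :=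
  [set t | exists s : seq (cstr m n * R),
     (forall p, Stdlib.Lists.List.In p s -> [/\ cstr_valid H p.1, active H w p.1 & 0 <= p.2])
     /\ t = (fun i => \sum_(p <- s) p.2 * cstr_row R H p.1 i)].

Definition unique_opt (R : realType) (m n : nat) (H : 'M['F_2]_(m, n))
  (y w : 'I_n -> R) : Prop :=
  fund_polytope R H w /\
  forall x, fund_polytope R H x -> x <> w -> dotR y w < dotR y x.

Definition iid_normal (R : realType) d (T : measurableType d)
  (P : probability T R) (n : nat) (eta : 'I_n -> {RV P >-> R}) (sigma : R) : Prop :=
  (forall B : 'I_n -> set R, (forall i, measurable (B i)) ->
     P (\bigcap_(i in [set: 'I_n]) (eta i @^-1` B i)) =
     (\prod_(i < n) P (eta i @^-1` B i))%E)
  /\ (forall i (A : set R), measurable A ->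
        distribution P (eta i) A = normal_prob 0 sigma A).

(* For a codeword c, flipping a constraint k of P(H) -- exchange x_i >= 0 and
   -x_i >= -1 when c_i = 1, and replace S by the symmetric difference of S and
   N(h_j) /\ supp c in a parity constraint, which keeps |S| odd because
   |N(h_j) /\ supp c| is even -- multiplies its row by phi_c and leaves its slack
   unchanged under x |-> x^c.  So x |-> x^c is an involutive symmetry of P(H)
   matching the constraints active at omega with those active at omega^c, and
   phi_c(y)^T x^c differs from y^T x by a constant; this gives the cone statement
   and shows that omega is the unique optimum for y iff omega^c is for phi_c(y).
   The second event is therefore {t + phi_c(eta) in U}, where U is the set of
   costs for which omega is the unique optimum.  U is open, because a unique
   optimum of a linear cost over P(H) is sharp, so it lies in the sigma-algebra
   generated by boxes; and t + phi_c(eta) has the same law as t + eta on boxes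
   since the coordinates of eta are independent and centred normal.
   Only omega in P(H), not its extremality, is used. *)

From HB Require Import structures.
From mathcomp Require Import all_boot all_order all_algebra.
From mathcomp Require Import all_classical all_reals all_analysis.
From mathcomp Require Import ring lra measurable_realfun.

Set Implicit Arguments.
Unset Strict Implicit.
Unset Printing Implicit Defensive.

Import Order.TTheory GRing.Theory Num.Theory.
Import numFieldNormedType.Exports.
Local Open Scope classical_set_scope.
Local Open Scope ring_scope.

Section DotR.
Variables (R : realType) (n : nat).
Implicit Types (a x y : 'I_n -> R).

Lemma dotRBr a x y : dotR a (fun i => x i - y i) = dotR a x - dotR a y.
Proof. by rewrite /dotR -sumrB; apply: eq_bigr => i _; rewrite mulrBr. Qed.

Lemma dotR_line a x y (s : R) :
  dotR a (fun i => x i + s * (y i - x i)) = dotR a x + s * (dotR a y - dotR a x).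
Proof. by rewrite -dotRBr /dotR mulr_sumr -big_split /=; apply: eq_bigr => i _; ring. Qed.

Lemma dotR_delta (r : R) i0 x : dotR (fun i => if i == i0 then r else 0) x = r * x i0.
Proof.
by rewrite /dotR (bigD1 i0) //= eqxx big1 ?addr0 // => i /negbTE ->; rewrite mul0r.
Qed.

End DotR.

Lemma eq_big_In (R : realType) (I : Type) (s : seq I) (F G : I -> R) :
  (forall p, List.In p s -> F p = G p) -> \sum_(p <- s) F p = \sum_(p <- s) G p.
Proof.
elim: s => [|p s IH] FG; first by rewrite !big_nil.
by rewrite !big_cons FG ?IH //; [move=> q sq; apply: FG; right | left].
Qed.

Lemma sum_mem_card (R : realType) (I : finType) (A : {set I}) :
  \sum_i ((i \in A)%:R : R) = #|A|%:R.
Proof. by rewrite -sum1_card natr_sum [RHS]big_mkcond; apply: eq_bigr => i _; case: (i \in A). Qed.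

Lemma cards_symdiff (T : finType) (A B : {set T}) :
  #|(A :\: B) :|: (B :\: A)| = (#|A :\: B| + #|B :\: A|)%N.
Proof.
rewrite cardsU; have -> : (A :\: B) :&: (B :\: A) = finset.set0.
  by apply/setP => x; rewrite !inE; case: (x \in A); rewrite ?andbF.
by rewrite finset.cards0 subn0.
Qed.

Lemma F2_eq01 (x : 'F_2) : x = 0 \/ x = 1.
Proof.
have : (x < 2)%N by case: x.
by case: x => [[|[|k]]] //= Hk _; [left|right]; exact/val_inj.
Qed.

Definition slack (R : realType) (m n : nat) (H : 'M['F_2]_(m, n)) (k : cstr m n)
  (x : 'I_n -> R) : R :=
  dotR (cstr_row R H k) x - cstr_rhs R k.

Definition in_cube (R : realType) (n : nat) (x : 'I_n -> R) := forall i, 0 <= x i <= 1.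

Section ConstraintFlip.
Variables (m n : nat) (H : 'M['F_2]_(m, n)) (c : 'rV['F_2]_n).

Definition Nsupp (j : 'I_m) : {set 'I_n} := [set i in Nrow H j | c 0 i != 0].

Lemma in_Nsupp j i : (i \in Nsupp j) = (i \in Nrow H j) && (c 0 i != 0).
Proof. by rewrite inE. Qed.

Definition cstr_flip (k : cstr m n) : cstr m n :=
  match k with
  | CLo i => if c 0 i != 0 then CHi m i else CLo m i
  | CHi i => if c 0 i != 0 then CLo m i else CHi m i
  | CPar j A => CPar j ((A :\: Nsupp j) :|: (Nsupp j :\: A))
  end.

Lemma cstr_flipK : involutive cstr_flip.
Proof.
case=> [i|i|j A] /=; try by case E: (c 0 i != 0) => /=; rewrite E.
congr CPar; apply/setP => i; rewrite !(finset.in_setU, finset.in_setD).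
by case: (i \in A); case: (i \in Nsupp j).
Qed.

Lemma codeword_Nsupp_even j : codeword H c -> ~~ odd #|Nsupp j|.
Proof.
move=> /(congr1 (fun M : 'M['F_2]_(m, 1) => M j 0)); rewrite !mxE => Hc.
rewrite -dvdn2 (dvdn_pcharf (@pchar_Fp 2 isT)) -sum1_card natr_sum -[X in _ == X]Hc big_mkcond.
apply/eqP; apply: eq_bigr => i _; rewrite mxE !inE.
by case: (F2_eq01 (H j i)) => ->; case: (F2_eq01 (c 0 i)) => ->;
  rewrite ?mul0r ?mul1r ?eqxx ?andbF ?andbT.
Qed.

Lemma cstr_flip_valid k : codeword H c -> cstr_valid H k -> cstr_valid H (cstr_flip k).
Proof.
move=> Hc; case: k => [i|i|j A] /=; try by case: (c 0 i != 0).
move=> [AN oddA]; split.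
  rewrite finset.subUset !(fintype.subset_trans (finset.subsetDl _ _)) //.
  by apply/fintype.subsetP => i; rewrite inE => /andP[].
rewrite cards_symdiff.
move: oddA (codeword_Nsupp_even j Hc).
rewrite -(cardsID (Nsupp j) A) -(cardsID A (Nsupp j)) finset.setIC !oddD.
by case: (odd #|Nsupp j :&: A|); case: (odd #|A :\: Nsupp j|); case: (odd #|Nsupp j :\: A|).
Qed.

Variable R : realType.

Lemma cstr_row_flip k : cstr_valid H k ->
  cstr_row R H (cstr_flip k) = phi c (cstr_row R H k).
Proof.
rewrite /phi; case: k => [i0|i0|j A] /= => [_|_|[AN _]]; apply/funext => i.
- have [->|ne] := eqVneq i i0; case: (c 0 i0 != 0) => /=;
    by rewrite ?eqxx ?(negbTE ne) ?mulr0 ?expr1 ?expr0 ?mulN1r ?mul1r.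
- have [->|ne] := eqVneq i i0; case: (c 0 i0 != 0) => /=;
    by rewrite ?eqxx ?(negbTE ne) ?mulr0 ?expr1 ?expr0 ?mulN1r ?opprK ?mul1r.
- have AN_i : i \in A -> i \in Nrow H j by move/(fintype.subsetP AN).
  move: AN_i; rewrite !(finset.in_setU, finset.in_setD) in_Nsupp.
  case: (i \in A); case: (i \in Nrow H j); case: (c 0 i != 0) => /= h;
    rewrite ?expr1 ?expr0 ?mul1r ?mulN1r ?opprK ?oppr0 //; by have := h isT.
Qed.

Lemma cstr_rhs_flip k : cstr_valid H k ->
  cstr_rhs R (cstr_flip k) = cstr_rhs R k - dotR (cstr_row R H k) (bitR R c).
Proof.
rewrite /bitR; case: k => [i|i|j A] /= => [_|_|[AN _]].
- by rewrite dotR_delta; case: eqP => /=; rewrite ?mulr0 ?mulr1 ?subr0 ?sub0r.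
- by rewrite dotR_delta; case: eqP => /=; rewrite ?mulr0 ?mulr1 ?subr0 ?opprK ?addNr.
- have pointwise i : (if i \in A then -1 else if i \in Nrow H j then 1 else 0) *
      (if c 0 i == 0 then 0 else 1) = (i \in Nsupp j :\: A)%:R - (i \in A :&: Nsupp j)%:R :> R.
    have AN_i : i \in A -> i \in Nrow H j by move/(fintype.subsetP AN).
    move: AN_i; rewrite finset.in_setD finset.in_setI in_Nsupp.
    case: (i \in A); case: (i \in Nrow H j); case: (c 0 i == 0) => /= h;
      rewrite ?mulr0 ?mulr1 ?subr0 ?sub0r ?subrr //; by have := h isT.
  rewrite /dotR (eq_bigr _ (fun i _ => pointwise i)) sumrB !sum_mem_card.
  rewrite cards_symdiff -(cardsID (Nsupp j) A) !natrD.
  ring.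
Qed.

End ConstraintFlip.

Section RelativePoint.
Variables (R : realType) (m n : nat) (H : 'M['F_2]_(m, n)) (c : 'rV['F_2]_n).
Implicit Types (a x y w : 'I_n -> R).

Lemma fund_polytope_cube x : fund_polytope R H x -> in_cube x.
Proof.
move=> Px i; apply/andP; split.
  by have := Px (CLo m i) I; rewrite /= dotR_delta mul1r.
by have := Px (CHi m i) I; rewrite /= dotR_delta mulN1r lerN2.
Qed.

Lemma relpt_cube x : in_cube x -> in_cube (relpt c x).
Proof.
move=> x01 i; have /andP[x0 x1] := x01 i; rewrite /relpt /bitR.
case: eqP => _; first by rewrite subr0 ger0_norm // x0 x1.
by rewrite ler0_norm ?subr_le0 // opprB; apply/andP; split; lra.
Qed.

Lemma relptK x : in_cube x -> relpt c (relpt c x) = x.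
Proof.
move=> x01; apply/funext => i; have /andP[x0 x1] := x01 i; rewrite /relpt /bitR.
case: eqP => _; first by rewrite !subr0 !ger0_norm.
by rewrite (ler0_norm (x := x i - 1)) ?subr_le0 // opprB addrAC subrr sub0r normrN ger0_norm.
Qed.

Lemma phiK : involutive (phi (R := R) c).
Proof.
move=> x; apply/funext => i; rewrite /phi mulrA -expr2 -exprM.
by case: (c 0 i != 0); rewrite ?expr0 ?mul1r // sqrrN expr1n mul1r.
Qed.

Lemma phi_shift (t e : 'I_n -> R) :
  phi c (fun i => t i + phi c e i) = (fun i => phi c t i + e i).
Proof. by rewrite -[in RHS](phiK e); apply/funext => i; rewrite /phi mulrDr. Qed.

Lemma dotR_phi_relpt a x : in_cube x ->
  dotR (phi c a) (relpt c x) = dotR a x - dotR a (bitR R c).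
Proof.
move=> x01; rewrite /dotR -sumrB; apply: eq_bigr => i _.
rewrite /phi /relpt /bitR; have /andP[x0 x1] := x01 i.
case: eqP => _ /=; first by rewrite expr0 mul1r !mulr0 !subr0 ger0_norm.
by rewrite expr1 ler0_norm ?subr_le0 //; ring.
Qed.

(* The flip [k |-> cstr_flip H c k] conjugates [A] by [phi c] and shifts [b] by
   [A (bitR c)], so it carries the slacks at [x] to the slacks at [relpt c x]. *)
Lemma slack_flip k x : cstr_valid H k -> in_cube x ->
  slack H (cstr_flip H c k) (relpt c x) = slack H k x.
Proof.
move=> kv x01; rewrite /slack cstr_row_flip // dotR_phi_relpt // cstr_rhs_flip //.
by rewrite opprB addrA subrK.
Qed.

Hypothesis Hc : codeword H c.

Lemma fund_polytope_relpt x : fund_polytope R H x -> fund_polytope R H (relpt c x).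
Proof.
move=> Px k kv; have fkv := cstr_flip_valid Hc kv.
rewrite -subr_ge0 -/(slack H k (relpt c x)) -{1}(cstr_flipK H c k).
rewrite slack_flip //; last exact: fund_polytope_cube.
by rewrite /slack subr_ge0; apply: Px.
Qed.

Lemma unique_opt_flip y w : unique_opt H y w -> unique_opt H (phi c y) (relpt c w).
Proof.
move=> [Pw w_opt]; split; first exact: fund_polytope_relpt.
move=> x Px x_neq; have x01 := fund_polytope_cube Px.
have Px' := fund_polytope_relpt Px.
have x'_neq : relpt c x <> w by move=> e; apply: x_neq; rewrite -e relptK.
have w01 := fund_polytope_cube Pw.
rewrite -(relptK x01) !dotR_phi_relpt ?ltrD2r //; first exact: w_opt Px' x'_neq.
exact: relpt_cube.
Qed.

Lemma unique_opt_phi_relpt y w : fund_polytope R H w ->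
  unique_opt H (phi c y) (relpt c w) <-> unique_opt H y w.
Proof.
move=> Pw; split; last exact: unique_opt_flip.
by move=> /unique_opt_flip; rewrite phiK relptK //; exact: fund_polytope_cube.
Qed.

Lemma recovery_cone_flip w t : fund_polytope R H w -> recovery_cone H w t ->
  recovery_cone H (relpt c w) (phi c t).
Proof.
move=> Pw [s [s_act ->]]; exists [seq (cstr_flip H c p.1, p.2) | p <- s]; split.
  move=> _ /List.in_map_iff [[k r] [<- /s_act [kv k_act r0]]] /=.
  split=> //; first exact: cstr_flip_valid.
  apply/eqP; rewrite -subr_eq0 -/(slack _ _ _) slack_flip //; last exact: fund_polytope_cube.
  by rewrite /slack k_act subrr.
apply/funext => i; rewrite big_map /phi mulr_sumr; apply: eq_big_In => -[k r] /s_act [kv _ _].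
by rewrite /= cstr_row_flip // /phi; ring.
Qed.

End RelativePoint.

Lemma finite_pos_lb (R : realType) (I : finType) (f : I -> R) :
  exists2 r : R, 0 < r & forall i, 0 < f i -> r <= f i.
Proof.
have [[i0 fi0]|no_pos] := pselect (exists i, 0 < f i); last first.
  by exists 1 => // i fi; exfalso; apply: no_pos; exists i.
by case: (arg_minP f (P := fun i => 0 < f i) fi0) => i fi i_min; exists (f i).
Qed.

Section L1dist.
Variables (R : realType) (n : nat).
Implicit Types (a x y : 'I_n -> R).

Definition l1dist x y := \sum_i `|x i - y i|.

Lemma l1dist_ge0 x y : 0 <= l1dist x y.
Proof. exact: sumr_ge0. Qed.

Lemma l1distxx x : l1dist x x = 0.
Proof. by rewrite /l1dist big1 // => i _; rewrite subrr normr0. Qed.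

Lemma l1dist_gt0 x y : x <> y -> 0 < l1dist x y.
Proof.
move=> xy; rewrite lt_neqAle l1dist_ge0 andbT eq_sym; apply: contra_notN xy => /eqP x_y.
apply/funext => i; apply/eqP; rewrite -subr_eq0 -normr_le0 -x_y /l1dist.
by rewrite (bigD1 i) //= lerDl sumr_ge0.
Qed.

Lemma l1dist_line x y (s : R) : 0 <= s ->
  l1dist (fun i => x i + s * (y i - x i)) x = s * l1dist y x.
Proof.
move=> s0; rewrite /l1dist mulr_sumr; apply: eq_bigr => i _.
by rewrite addrAC subrr add0r normrM ger0_norm.
Qed.

Lemma continuous_dotR a : continuous (fun v : 'rV[R]_n => dotR a (fun i => v 0 i)).
Proof.
apply: (continuous_big add_continuous) => i _ v.
exact: cvgM (cvg_cst (a i)) (@coord_continuous _ _ _ 0 i v).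
Qed.

Lemma continuous_l1dist y : continuous (fun v : 'rV[R]_n => l1dist (fun i => v 0 i) y).
Proof.
apply: (continuous_big add_continuous) => i _ v.
exact: cvg_norm (cvgB (@coord_continuous _ _ _ 0 i v) (cvg_cst (y i))).
Qed.

End L1dist.

Lemma cstr_row_norm_le1 (R : realType) (m n : nat) (H : 'M['F_2]_(m, n)) k i :
  `|cstr_row R H k i| <= 1.
Proof. by case: k => [i'|i'|j A] /=; repeat case: ifP => _; rewrite ?normrN ?normr1 ?normr0. Qed.

Lemma dotR_cstr_row_le (R : realType) (m n : nat) (H : 'M['F_2]_(m, n)) k (x : 'I_n -> R) :
  `|dotR (cstr_row R H k) x| <= \sum_i `|x i|.
Proof.
apply: le_trans (ler_norm_sum _ _ _) _; apply: ler_sum => i _.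
by rewrite normrM ler_piMl ?cstr_row_norm_le1.
Qed.

Lemma closed_ge_continuous (T : topologicalType) (R : realType) (f : T -> R) (b : R) :
  continuous f -> closed [set t | b <= f t].
Proof. by move=> f_cont; apply: (preimage_closed (D := [set y | b <= y])) => // t _. Qed.

Section UniqueOptStable.
Variables (R : realType) (m n : nat) (H : 'M['F_2]_(m, n)) (w : 'I_n -> R).
Hypothesis Pw : fund_polytope R H w.

Lemma slack_lb : exists2 r : R, 0 < r & forall k, 0 < slack H k w -> r <= slack H k w.
Proof.
have [r1 r1_gt0 r1_lb] := finite_pos_lb (fun i => slack H (CLo m i) w).
have [r2 r2_gt0 r2_lb] := finite_pos_lb (fun i => slack H (CHi m i) w).
have [r3 r3_gt0 r3_lb] := finite_pos_lb (fun p : 'I_m * {set 'I_n} => slack H (CPar p.1 p.2) w).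
exists (Num.min r1 (Num.min r2 r3)); first by rewrite !lt_min r1_gt0 r2_gt0 r3_gt0.
case=> [i|i|j A] pos; rewrite !ge_min ?r1_lb ?r2_lb ?orbT //.
by rewrite (r3_lb (j, A)) ?orbT.
Qed.

(* Within l1-distance [r] of [w], a point on a ray from [w] into [P(H)] only
   has to respect the constraints active at [w]: the others have slack [>= r]. *)
Lemma fund_polytope_ray r x (s : R) : 0 < r ->
  (forall k, 0 < slack H k w -> r <= slack H k w) ->
  fund_polytope R H x -> 0 <= s -> s * l1dist x w <= r ->
  fund_polytope R H (fun i => w i + s * (x i - w i)).
Proof.
move=> r_gt0 r_lb Px s_ge0 s_le k kv; rewrite -subr_ge0 -/(slack _ _ _).
have sw_ge0 : 0 <= slack H k w by rewrite subr_ge0; apply: Pw.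
have sx_ge0 : 0 <= slack H k x by rewrite subr_ge0; apply: Px.
have step : slack H k (fun i => w i + s * (x i - w i)) =
    slack H k w + s * (slack H k x - slack H k w).
  by rewrite /slack dotR_line; ring.
have D_le : slack H k w - slack H k x <= l1dist x w.
  have := dotR_cstr_row_le H k (fun i => x i - w i).
  by rewrite dotRBr -/(l1dist x w) ler_norml /slack => /andP[+ _]; lra.
rewrite step; move: sw_ge0; rewrite le_eqVlt => /orP[/eqP <-|/r_lb r_le].
  by rewrite add0r subr0 mulr_ge0.
have : s * (slack H k w - slack H k x) <= r := le_trans (ler_wpM2l s_ge0 D_le) s_le.
lra.
Qed.

Lemma unique_opt_gap (u : 'I_n -> R) (r : R) : 0 < r -> unique_opt H u w ->
  exists2 e : R, 0 < e & forall x, fund_polytope R H x -> r <= l1dist x w ->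
    e <= dotR u x - dotR u w.
Proof.
move=> r_gt0 [_ w_opt].
pose vec (v : 'rV[R]_n) : 'I_n -> R := fun i => v 0 i.
have vecK x : vec (\row_i x i) = x by apply/funext => i; rewrite /vec mxE.
pose K := [set v | fund_polytope R H (vec v) /\ r <= l1dist (vec v) w].
have [K_ne|K0] := pselect (K !=set0); last first.
  by exists 1 => // x Px xr; exfalso; apply: K0; exists (\row_i x i); rewrite /K /= vecK.
have K_closed : closed K.
  have -> : K = \bigcap_(k in cstr_valid H)
                 [set v | cstr_rhs R k <= dotR (cstr_row R H k) (vec v)]
               `&` [set v | r <= l1dist (vec v) w].
    by apply/seteqP; split=> v [Pv rv]; split=> // k kv; apply: Pv.
  apply: closedI; last exact/closed_ge_continuous/continuous_l1dist.
  by apply: closed_bigI => k _; exact/closed_ge_continuous/continuous_dotR.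
have K_compact : compact K.
  apply: (subclosed_compact K_closed
    (@rV_compact _ n (fun=> `[0 : R, 1]%classic) (fun=> @segment_compact R 0 1))).
  move=> v [/fund_polytope_cube v01 _] /= i; have /andP[v0 v1] := v01 i.
  by rewrite /= in_itv /= v0 v1.
have [v0 /set_mem [Pv0 rv0] v0_min] := compact_EVT_min K_ne K_compact
  (continuous_subspaceT (@continuous_dotR _ _ u)).
have v0_neq : vec v0 <> w by move=> v0w; move: rv0; rewrite v0w l1distxx; lra.
exists (dotR u (vec v0) - dotR u w); first by rewrite subr_gt0; apply: w_opt.
move=> x Px rx; rewrite lerD2r -(vecK x).
by apply: v0_min; apply: mem_set; rewrite /K /= vecK.
Qed.

Lemma unique_opt_sharp u : unique_opt H u w ->
  exists2 eps : R, 0 < eps & forall x, fund_polytope R H x ->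
    eps * l1dist x w <= dotR u x - dotR u w.
Proof.
move=> w_uopt; have [r r_gt0 r_lb] := slack_lb.
have [e e_gt0 gap] := unique_opt_gap r_gt0 w_uopt.
exists (e / r); first by rewrite divr_gt0.
move=> x Px; have [->|x_neq] := pselect (x = w); first by rewrite l1distxx mulr0 subrr.
have l1_gt0 := l1dist_gt0 x_neq.
pose s := r / l1dist x w.
have s_ge0 : 0 <= s by rewrite divr_ge0 // ltW.
have s_l1 : s * l1dist x w = r by rewrite divfK // gt_eqF.
have s_le : s * l1dist x w <= r by rewrite s_l1.
have Py := fund_polytope_ray r_gt0 r_lb Px s_ge0 s_le.
have := gap _ Py; rewrite l1dist_line // s_l1 lexx dotR_line addrAC subrr add0r.
move=> /(_ isT) e_le; rewrite mulrAC ler_pdivrMr //.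
by apply: le_trans (ler_wpM2r (ltW l1_gt0) e_le) _; rewrite mulrAC s_l1 mulrC.
Qed.

Lemma unique_opt_stable u : unique_opt H u w ->
  exists2 e : R, 0 < e & forall u', (forall i, `|u' i - u i| < e) -> unique_opt H u' w.
Proof.
move=> w_uopt; have [eps eps_gt0 sharp] := unique_opt_sharp w_uopt.
exists eps => // u' u'_near; split=> // x Px x_neq.
have /existsP [i0 xi0] : [exists i, x i != w i].
  apply: contra_notT x_neq => /existsPn x_eq; apply/funext => i; exact/eqP/negPn/x_eq.
have cost_split : dotR u' x - dotR u' w =
    dotR u x - dotR u w + \sum_i (u' i - u i) * (x i - w i).
  by rewrite -!dotRBr /dotR -big_split; apply: eq_bigr => i _ /=; ring.
have lower : \sum_i (eps - `|u' i - u i|) * `|x i - w i| <=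
    eps * l1dist x w + \sum_i (u' i - u i) * (x i - w i).
  rewrite /l1dist mulr_sumr -big_split; apply: ler_sum => i _ /=.
  by rewrite mulrBl lerD2l -normrM lerNl -normrN ler_norm.
have pos : 0 < \sum_i (eps - `|u' i - u i|) * `|x i - w i|.
  rewrite (bigD1 i0) //= ltr_pwDl //.
    by rewrite mulr_gt0 ?subr_gt0 ?normr_gt0 ?subr_eq0.
  by apply: sumr_ge0 => i _; rewrite mulr_ge0 // subr_ge0 ltW.
have := sharp x Px; rewrite -subr_gt0 cost_split; lra.
Qed.

End UniqueOptStable.

Section Boxes.
Variables (R : realType) (n : nat).

Definition box (B : 'I_n -> set R) : set ('I_n -> R) := [set y | forall i, B i (y i)].

Definition boxes : set (set ('I_n -> R)) :=
  [set A | exists2 B, (forall i, measurable (B i)) & A = box B].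

Lemma boxesI : setI_closed boxes.
Proof.
move=> _ _ [B1 mB1 ->] [B2 mB2 ->]; exists (fun i => B1 i `&` B2 i).
  by move=> i; exact: measurableI.
by apply/seteqP; split=> y /=; [move=> [y1 y2] i | move=> y12; split=> i; case: (y12 i)].
Qed.

Lemma boxesT : boxes setT.
Proof. by exists (fun=> setT) => //; apply/seteqP; split. Qed.

Definition ratbox (q : {ffun 'I_n -> rat * rat}) : set ('I_n -> R) :=
  box (fun i => `](ratr (q i).1 : R), ratr (q i).2[%classic).

Lemma rat_cube_around (u : 'I_n -> R) (e : R) : 0 < e ->
  exists q, ratbox q u /\ forall u', ratbox q u' -> forall i, `|u' i - u i| < e.
Proof.
move=> e_gt0.
have /fin_all_exists [p p_u] : forall i, exists p : rat * rat,
    u i - e < ratr p.1 < u i /\ u i < ratr p.2 < u i + e.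
  move=> i; have lo : u i - e < u i by rewrite ltrBlDr ltrDl.
  have hi : u i < u i + e by rewrite ltrDl.
  have [a] := rat_in_itvoo lo; have [b] := rat_in_itvoo hi.
  by rewrite !in_itv /= => ? ?; exists (a, b).
exists [ffun i => p i]; rewrite /ratbox /box; split=> [i|u' u'_q i].
  by rewrite /= ffunE in_itv /=; have [/andP[_ ->] /andP[-> _]] := p_u i.
have := u'_q i; rewrite /= ffunE in_itv /= => /andP[lo hi].
have [/andP[p1_lo _] /andP[_ p2_hi]] := p_u i.
rewrite ltr_norml; apply/andP; split; lra.
Qed.

(* Open sets for the sup-norm topology are countable unions of rational boxes. *)
Lemma sigma_boxes_open (G : set ('I_n -> R)) :
  (forall u, G u -> exists2 e : R, 0 < e &
     forall u', (forall i, `|u' i - u i| < e) -> G u') ->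
  <<s boxes >> G.
Proof.
move=> G_open.
pose F q := if `[< ratbox q `<=` G >] then ratbox q else set0.
have -> : G = \bigcup_q F q.
  apply/seteqP; split=> [u Gu|u [q _]]; last by rewrite /F; case: asboolP => // qG /qG.
  have [e e_gt0 e_G] := G_open u Gu.
  have [q [q_u q_e]] := rat_cube_around u e_gt0.
  exists q => //; rewrite /F asboolT // => u' /q_e; exact: e_G.
apply: (@countable_bigcupT_measurable _ (g_sigma_algebraType boxes)) => // q.
rewrite /F; case: asboolP => _; last exact: measurable0.
by apply: sub_sigma_algebra; exists (fun i => `](ratr (q i).1 : R), ratr (q i).2[%classic).
Qed.

Variables (d : measure_display) (T : measurableType d).

Lemma measurable_preimage_box (Y : T -> 'I_n -> R) B :
  (forall i, measurable_fun setT (fun o => Y o i)) -> (forall i, measurable (B i)) ->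
  measurable (Y @^-1` box B).
Proof.
move=> mY mB; have -> : Y @^-1` box B = \bigcap_(i in setT) ((fun o => Y o i) @^-1` B i).
  by apply/seteqP; split=> o /= Yo i; [move=> _|]; exact: Yo.
apply: fin_bigcap_measurable; first exact: finite_finset.
by move=> i _; rewrite -[X in measurable X]setTI; exact: mY.
Qed.

Lemma measurable_fun_boxes (Y : T -> 'I_n -> R) :
  (forall i, measurable_fun setT (fun o => Y o i)) ->
  measurable_fun setT (Y : T -> g_sigma_algebraType boxes).
Proof.
move=> mY; apply: (@measurability _ _ T (g_sigma_algebraType boxes) setT Y boxes) => //.
move=> _ [_ [B mB ->] <-].
by rewrite setTI; exact: measurable_preimage_box.
Qed.

Lemma law_eq_boxes (P : probability T R) (X X' : T -> 'I_n -> R) :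
  (forall i, measurable_fun setT (fun o => X o i)) ->
  (forall i, measurable_fun setT (fun o => X' o i)) ->
  (forall B, (forall i, measurable (B i)) -> P (X @^-1` box B) = P (X' @^-1` box B)) ->
  forall A, <<s boxes >> A -> P (X @^-1` A) = P (X' @^-1` A).
Proof.
move=> mX mX' law.
pose Xm : {mfun T >-> g_sigma_algebraType boxes} :=
  HB.pack (X : T -> g_sigma_algebraType boxes)
    (isMeasurableFun.Build _ _ _ _ _ (measurable_fun_boxes mX)).
pose Xm' : {mfun T >-> g_sigma_algebraType boxes} :=
  HB.pack (X' : T -> g_sigma_algebraType boxes)
    (isMeasurableFun.Build _ _ _ _ _ (measurable_fun_boxes mX')).
apply: (@g_sigma_algebra_measure_unique _ _ (g_sigma_algebraType boxes) boxes _
  (fun=> setT) _ _ (distribution P Xm) (distribution P Xm') boxesI).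
- by move=> A BA; apply: sub_sigma_algebra.
- by move=> _; exact: boxesT.
- by rewrite bigcup_const.
- by move=> _ [B mB ->]; exact: law.
- by move=> _; apply: (@le_lt_trans _ _ 1%E); [exact: probability_le1 | exact: ltry].
Qed.

End Boxes.

Lemma normal_probN (R : realType) (s : R) (A : set R) : s != 0 -> measurable A ->
  normal_prob 0 s (-%R @^-1` A) = normal_prob 0 s A.
Proof.
move=> s0 mA; rewrite /normal_prob.
transitivity (\int[lebesgue_measure]_(x in (-%R : R -> measurableTypeR R) @^-1` A)
   ((fun x => (normal_pdf 0 s x)%:E) \o (-%R : R -> measurableTypeR R)) x)%E.
  by apply: eq_integral => x _ /=; rewrite /normal_pdf (negbTE s0) /normal_fun !subr0 sqrrN.
rewrite -ge0_integral_pushforward //.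
- by apply: eq_measure_integral => B mB _; exact: lebesgue_measureN.
- by apply/measurable_EFinP; apply: measurable_funTS; exact: measurable_normal_pdf.
- by move=> y _; rewrite lee_fin normal_pdf_ge0.
Qed.

Section SignFlip.
Variables (R : realType) (n : nat) (d : measure_display) (T : measurableType d).
Variables (P : probability T R) (eta : 'I_n -> {RV P >-> R}).
Hypothesis eta_indep : forall B : 'I_n -> set R, (forall i, measurable (B i)) ->
  P (\bigcap_(i in [set: 'I_n]) (eta i @^-1` B i)) = (\prod_(i < n) P (eta i @^-1` B i))%E.
Hypothesis eta_sym : forall i (A : set R), measurable A ->
  P (eta i @^-1` (-%R @^-1` A)) = P (eta i @^-1` A).

Lemma box_law_sign_flip (c : 'rV['F_2]_n) (a : 'I_n -> R) (B : 'I_n -> set R) :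
  (forall i, measurable (B i)) ->
  P [set o | forall i, B i (a i + eta i o)] =
  P [set o | forall i, B i (a i + phi c (fun j => eta j o) i)].
Proof.
move=> mB; pose C i := [set y | B i (a i + y)].
pose C' i := if c 0 i != 0 then -%R @^-1` C i else C i.
have mC i : measurable (C i).
  rewrite -[C i]setTI; apply: (measurable_funD (measurable_cst _) (@measurable_id _ R _)) => //.
have mC' i : measurable (C' i).
  rewrite /C'; case: (c 0 i != 0) => //.
  by have := measurable_funN (@measurable_id _ R setT) measurableT (mC i); rewrite setTI.
have -> : [set o | forall i, B i (a i + eta i o)] = \bigcap_(i in setT) (eta i @^-1` C i).
  by apply/seteqP; split=> o /= Bo i; [move=> _|]; exact: Bo.
have -> : [set o | forall i, B i (a i + phi c (fun j => eta j o) i)] =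
          \bigcap_(i in setT) (eta i @^-1` C' i).
  apply/seteqP; split=> o /= Bo i; [move=> _|]; move: (Bo i);
    rewrite /C' /C /phi; case: (c 0 i != 0); rewrite /= ?expr0 ?expr1 ?mul1r ?mulN1r //; exact.
rewrite !eta_indep //; apply: eq_bigr => i _.
by rewrite /C'; case: (c 0 i != 0) => //; rewrite eta_sym.
Qed.

End SignFlip.

Lemma iid_normal_symmetric (R : realType) (d : measure_display) (T : measurableType d)
    (P : probability T R) (n : nat) (eta : 'I_n -> {RV P >-> R}) (sigma : R) :
  iid_normal eta sigma -> sigma != 0 ->
  forall i (A : set R), measurable A -> P (eta i @^-1` (-%R @^-1` A)) = P (eta i @^-1` A).
Proof.
move=> [_ eta_law] s0 i A mA.
have mNA : measurable (-%R @^-1` A).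
  by have := measurable_funN (@measurable_id _ R setT) measurableT mA; rewrite setTI.
by have := eta_law i _ mNA; rewrite normal_probN // -(eta_law i _ mA); exact.
Qed.

Theorem theorem3 (R : realType) (m n : nat) (H : 'M['F_2]_(m, n))
  (c : 'rV['F_2]_n) (w t : 'I_n -> R) :
  codeword H c ->
  LP_pseudocodeword H w ->
  recovery_cone H w t ->
  recovery_cone H (relpt c w) (phi c t) /\
  (forall sigma : R, 0 < sigma ->
   forall (d : measure_display) (T : measurableType d) (P : probability T R)
          (eta : 'I_n -> {RV P >-> R}),
     iid_normal eta sigma ->
     P [set o | unique_opt H (fun i => t i + eta i o) w] =
     P [set o | unique_opt H (fun i => phi c t i + eta i o) (relpt c w)]).
Proof.
move=> Hc [Pw _] t_cone; split; first exact: recovery_cone_flip.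
move=> sigma sigma_gt0 d T P eta eta_iid.
have -> : [set o | unique_opt H (fun i => phi c t i + eta i o) (relpt c w)] =
    (fun o i => t i + phi c (fun j => eta j o) i) @^-1` [set u | unique_opt H u w].
  have shift o : unique_opt H (fun i => phi c t i + eta i o) (relpt c w) <->
      unique_opt H (fun i => t i + phi c (fun j => eta j o) i) w.
    by rewrite -phi_shift; exact: unique_opt_phi_relpt.
  by apply/seteqP; split=> o /shift.
apply: (law_eq_boxes (X := fun o i => t i + eta i o)).
- by move=> i; apply: measurable_funD.
- by move=> i; apply: measurable_funD => //; apply: measurable_funM.
- move=> B mB; apply: box_law_sign_flip => //; first by case: eta_iid.
  by apply: iid_normal_symmetric eta_iid _; rewrite gt_eqF.
- by apply: sigma_boxes_open => u; exact: unique_opt_stable.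
Qed.
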